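(* Let $G$ be a finite group, $H\leq G$, $T$ a right transversal of $H$ in $G$ containing $1$, and $\chi$ a linear character of $H$. For $g\in G$ write $g=\mathsf{H}(g)\mathsf{T}(g)$ with $\mathsf{H}(g)\in H$, $\mathsf{T}(g)\in T$, and set $\chi_{\mathsf{H}}(g)=\chi(\mathsf{H}(g))$. Let $G$ act on $T\times T$ by $(s,t)\cdot g=(\mathsf{T}(sg),\mathsf{T}(tg))$. For $t\in T$, the orbit (orbital) $\mathcal{O}$ of $(1,t)$ is called orientable if for all $(u,v)\in\mathcal{O}$ and all $g,k\in Hu\cap t^{-1}Hv$ one has $\chi_{\mathsf{H}}(g)^{-1}\chi_{\mathsf{H}}(tg)=\chi_{\mathsf{H}}(k)^{-1}\chi_{\mathsf{H}}(tk)$. Then $\mathcal{O}$ is orientable if and only if $\chi(tht^{-1}h^{-1})=1$ for all $h\in H\cap t^{-1}Ht$.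
   Context: A right transversal $T$ to $H$ in $G$ is a set such that every $g\in G$ factorises uniquely as $g=ht$ with $h\in H$, $t\in T$. *)

From mathcomp Require Import all_boot all_order all_algebra all_fingroup all_solvable all_field all_character.
Set Implicit Arguments. Unset Strict Implicit. Unset Printing Implicit Defensive.
Import GRing.Theory Num.Theory.
Local Open Scope group_scope.

Section Defs.
Variable gT : finGroupType.

Definition Tpart (H T : {set gT}) (g : gT) : gT := transversal_repr 1 T (H :* g).

Definition Hpart (H T : {set gT}) (g : gT) : gT := g * (Tpart H T g)^-1.

Definition chiH (H : {group gT}) (T : {set gT}) (chi : 'CF(H)) (g : gT) : algC :=
  chi (Hpart H T g).

(* The orbit of (1,t) under the action (s,u).g = (T(sg), T(ug)) of G on T x T;
   since T(1 g) = T(g), it is {(T(g), T(tg)) | g in G}. *)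
Definition orbital (G H T : {set gT}) (t : gT) : {set gT * gT} :=
  [set (Tpart H T g, Tpart H T (t * g)) | g in G].

Definition orientable (G H : {group gT}) (T : {set gT}) (chi : 'CF(H)) (t : gT) : Prop :=
  forall u v, (u, v) \in orbital G H T t ->
  forall g k, g \in (H :* u) :&: (t^-1 *: (H :* v)) ->
              k \in (H :* u) :&: (t^-1 *: (H :* v)) ->
  ((chiH T chi g)^-1 * chiH T chi (t * g) = (chiH T chi k)^-1 * chiH T chi (t * k))%R.
End Defs.

From mathcomp Require Import all_boot all_order all_algebra all_fingroup all_solvable all_field all_character.
Import GRing.Theory Num.Theory.
Local Open Scope group_scope.

(* For h in H the coset H(hg) is Hg, so chi_H(hg) = chi(h) chi_H(g).  If also
   tht^-1 is in H, then t(hg) = (tht^-1)(tg), so replacing g by hg multiplies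
   the quotient chi_H(g)^-1 chi_H(tg) by chi(tht^-1 h^-1).  Two elements g, k of
   Hu and t^-1Hv always differ by such an h = kg^-1, which gives sufficiency;
   for necessity take (u, v) = (1, t), g = 1 and k = h, where the quotient at 1
   equals 1. *)

Lemma mulgV_rcoset {gT : finGroupType} {H : {group gT}} {u x y : gT} :
  x \in H :* u -> y \in H :* u -> x * y^-1 \in H.
Proof. by move=> xHu yHu; rewrite -mem_rcoset (rcoset_transl _ xHu) rcoset_sym. Qed.

Section Transversal.
Context {gT : finGroupType} {G H : {group gT}} {T : {set gT}}.
Hypotheses (sHG : H \subset G) (trT : is_transversal T (rcosets H G) G).

Lemma Tpart_id {u g} : u \in T -> g \in H :* u -> Tpart H T g = u.
Proof.
move=> Tu gHu.
have Gg : g \in G.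
  have Gu : u \in G := subsetP (transversal_sub trT) u Tu.
  by case/rcosetP: gHu => a Ha ->; rewrite groupM // (subsetP sHG).
have cosHg : H :* g \in rcosets H G by apply/rcosetsP; exists g.
move/setP/(_ u): (setI_transversal_pblock trT 1 cosHg).
by rewrite !inE Tu -rcoset_sym gHu => /esym/eqP.
Qed.

Lemma orbital_1t {t} : 1 \in T -> t \in T -> (1, t) \in orbital G H T t.
Proof.
move=> T1 Tt; apply/imsetP; exists 1; rewrite ?group1 // mulg1.
by rewrite (Tpart_id T1 (rcoset_refl _ _)) (Tpart_id Tt (rcoset_refl _ _)).
Qed.

Lemma chiH_id (chi : 'CF(H)) u : chi \is a linear_char -> u \in T ->
  chiH T chi u = 1%R.
Proof.
by move=> lchi Tu; rewrite /chiH /Hpart (Tpart_id Tu (rcoset_refl _ _)) mulgV lin_char1.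
Qed.

End Transversal.

Section LinearChar.
Context {gT : finGroupType} {H : {group gT}} (T : {set gT}) (chi : 'CF(H)).
Hypothesis lchi : chi \is a linear_char.

Lemma Tpart_mulHl h g : h \in H -> Tpart H T (h * g) = Tpart H T g.
Proof. by move=> Hh; rewrite /Tpart rcosetM rcoset_id. Qed.

(* No transversal hypothesis is needed: when H(g) is outside H, so is hH(g),
   and both sides vanish. *)
Lemma chiH_mulHl h g : h \in H -> chiH T chi (h * g) = (chi h * chiH T chi g)%R.
Proof.
move=> Hh; rewrite /chiH /Hpart Tpart_mulHl // -mulgA.
set x := g * _; have [Hx | notHx] := boolP (x \in H); first exact: lin_charM.
by rewrite [chi x]cfun0 // cfun0 ?mulr0 // groupMl.
Qed.

Definition chiH_ratio (t g : gT) : algC :=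
  ((chiH T chi g)^-1 * chiH T chi (t * g))%R.

Lemma chiH_ratio_mulHl t h g : h \in H -> t * h * t^-1 \in H ->
  chiH_ratio t (h * g) = (chi (t * h * t^-1 * h^-1)%g * chiH_ratio t g)%R.
Proof.
move=> Hh Hth; rewrite /chiH_ratio chiH_mulHl //.
have -> : t * (h * g) = t * h * t^-1 * (t * g) by rewrite !mulgA mulgKV.
rewrite chiH_mulHl // (lin_charM lchi Hth) ?groupV // lin_charV // invfM mulrACA.
by congr (_ * _)%R; rewrite mulrC.
Qed.

End LinearChar.

Arguments chiH_ratio_mulHl {gT H T chi} lchi {t h g}.

Theorem proposition3p6 (gT : finGroupType) (G H : {group gT}) (T : {set gT})
    (chi : 'CF(H)) (t : gT) :
  H \subset G ->
  is_transversal T (rcosets H G) G ->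
  1 \in T ->
  chi \is a linear_char ->
  t \in T ->
  orientable G T chi t <->
  (forall h, h \in H :&: (H :^ t) -> chi (t * h * t^-1 * h^-1) = 1%R).
Proof.
move=> sHG trT T1 lchi Tt.
have conjH h : (h \in H :^ t) = (t * h * t^-1 \in H).
  by rewrite mem_conjg conjgE invgK mulgA.
split=> [orT h /setIP[Hh] | comm1 u v _ g k].
- rewrite conjH => Hth.
  have mem1 : 1 \in H :* 1 :&: t^-1 *: (H :* t).
    by rewrite !inE rcoset1 group1 mem_lcoset invgK mulg1 rcoset_refl.
  have memh : h \in H :* 1 :&: t^-1 *: (H :* t).
    by rewrite !inE rcoset1 Hh mem_lcoset invgK mem_rcoset.
  have ratio1 : chiH_ratio T chi t 1 = 1%R.
    by rewrite /chiH_ratio mulg1 !(chiH_id sHG trT) // invr1 mulr1.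
  have ratio_h : chiH_ratio T chi t h = chi (t * h * t^-1 * h^-1).
    by rewrite -{1}[h]mulg1 (chiH_ratio_mulHl lchi Hh Hth) ratio1 mulr1.
  rewrite -ratio_h -ratio1.
  exact: orT _ _ (orbital_1t sHG trT T1 Tt) _ _ memh mem1.
- rewrite !inE !mem_lcoset !invgK => /andP[gHu tgHv] /andP[kHu tkHv].
  have Hkg := mulgV_rcoset kHu gHu.
  have Htkg : t * (k * g^-1) * t^-1 \in H.
    by rewrite !mulgA -(mulgA _ g^-1) -invMg (mulgV_rcoset tkHv tgHv).
  rewrite -/(chiH_ratio T chi t g) -/(chiH_ratio T chi t k) -[k](mulgKV g).
  by rewrite (chiH_ratio_mulHl lchi Hkg Htkg) comm1 ?mul1r // inE Hkg conjH.
Qed.
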